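(* Let $M\ge 2N-1$. For a generic $N$-dimensional subspace $W\subset\mathbb R^M$ (i.e. all $W$ in a Zariski open dense subset of the Grassmannian $Gr(N,M)$) the following holds: for every $S\subset\{1,\dots,M\}$ and every $u\in W$, one has $\sigma_S(u)\in W$ if and only if $\sigma_S(u)=\pm u$.
   Context: For $S\subset\{1,\dots,M\}$ with characteristic function $S(i)$ ($S(i)=1$ if $i\in S$, $0$ otherwise), $\sigma_S:\mathbb R^M\to\mathbb R^M$ is $\sigma_S(a_1,\dots,a_M)=((-1)^{S(1)}a_1,\dots,(-1)^{S(M)}a_M)$. *)

From HB Require Import structures.
From mathcomp Require Import all_boot all_order all_algebra.
From mathcomp Require Import reals.
From mathcomp Require Import mpoly.
Set Implicit Arguments. Unset Strict Implicit. Unset Printing Implicit Defensive.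
Import Order.TTheory GRing.Theory Num.Theory.
Local Open Scope ring_scope.

Definition sigma (R : ringType) (M : nat) (S : {set 'I_M}) (u : 'rV[R]_M) : 'rV[R]_M :=
  \row_i ((-1) ^+ (i \in S) * u 0 i).

Definition mxeval (R : comRingType) (N M : nat) (P : {mpoly R[N * M]}) (A : 'M[R]_(N, M)) : R :=
  P.@[fun k => mxvec A 0 k].

From HB Require Import structures.
From mathcomp Require Import all_boot all_order all_algebra.
From mathcomp Require Import reals.
From mathcomp Require Import mpoly.
From mathcomp Require Import zify.
Set Implicit Arguments. Unset Strict Implicit. Unset Printing Implicit Defensive.
Import Order.TTheory GRing.Theory Num.Theory.
Local Open Scope ring_scope.

(* Take P to be the product of all N x N minors of the generic N x M matrix; it is
   nonzero because every maximal minor of a Vandermonde matrix with distinct nodes is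
   itself a nonzero Vandermonde determinant. If no maximal minor of A vanishes, a vector
   of the row space of A that vanishes on N coordinates is zero. For u and sigma_S u in
   the row space, sigma_S u + u vanishes on S and sigma_S u - u on its complement, and
   since M >= 2N - 1 one of these two sets has at least N elements. *)

Lemma exists_inj_into (T : finType) (n : nat) (C : {set T}) : (n <= #|C|)%N ->
  exists f : 'I_n -> T, injective f /\ forall k, f k \in C.
Proof.
move=> leC; exists (fun k => @enum_val _ (mem C) (widen_ord leC k)); split.
  by move=> a b /enum_val_inj/(congr1 val) /= ab; apply: val_inj.
by move=> k; apply: (@enum_valP _ (mem C)).
Qed.

Lemma card_set_or_setC_ge (N M : nat) (S : {set 'I_M}) : (2 * N - 1 <= M)%N ->
  (N <= #|S|)%N \/ (N <= #|~: S|)%N.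
Proof. by move=> hNM; have := cardsC S; rewrite card_ord; lia. Qed.

Section SignFlip.
Variables (R : nzRingType) (M n : nat) (S : {set 'I_M}) (u : 'rV[R]_M) (f : 'I_n -> 'I_M).

Lemma colsub_sigma_addr : (forall k, f k \in S) -> colsub f (sigma S u + u) = 0.
Proof. by move=> fS; apply/matrixP => i k; rewrite (ord1 i) !mxE fS mulN1r addNr. Qed.

Lemma colsub_sigma_subr : (forall k, f k \notin S) -> colsub f (sigma S u - u) = 0.
Proof.
by move=> fS; apply/matrixP => i k; rewrite (ord1 i) !mxE (negbTE (fS k)) mul1r subrr.
Qed.

End SignFlip.

Section MaximalMinors.
Variables (F : fieldType) (N M : nat) (A : 'M[F]_(N, M)) (f : 'I_N -> 'I_M).
Hypothesis minor_neq0 : \det (colsub f A) != 0.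

Let minor_unit : colsub f A \in unitmx.
Proof. by rewrite unitmxE unitfE. Qed.

Lemma submx_colsub_eq0 m (v : 'M_(m, M)) : (v <= A)%MS -> colsub f v = 0 -> v = 0.
Proof.
move=> /submxP [D ->]; rewrite -mulmx_colsub => D0.
by rewrite -[D](mulmxK minor_unit) D0 !mul0mx.
Qed.

Lemma mxrank_minor_neq0 : \rank A = N.
Proof.
apply/eqP; rewrite eqn_leq rank_leq_row /=.
apply: leq_trans (mxrankM_maxl A (colsub f 1%:M)).
by rewrite mulmx_colsub mulmx1 (mxrank_unit minor_unit).
Qed.

End MaximalMinors.

Section MinorsPolynomial.
Variables (N M : nat).

Definition generic_mx (R : comNzRingType) : 'M[{mpoly R[N * M]}]_(N, M) :=
  \matrix_(i, j) 'X_(mxvec_index i j).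

Definition minors_mpoly (R : comNzRingType) : {mpoly R[N * M]} :=
  \prod_(f : {ffun 'I_N -> 'I_M} | injectiveb f) \det (colsub f (generic_mx R)).

Lemma mxeval_minors_mpoly (R : comNzRingType) (A : 'M[R]_(N, M)) :
  mxeval (minors_mpoly R) A =
  \prod_(f : {ffun 'I_N -> 'I_M} | injectiveb f) \det (colsub f A).
Proof.
rewrite /mxeval rmorph_prod; apply: eq_bigr => f _; rewrite -det_map_mx.
by congr (\det _); apply/matrixP => i j; rewrite !mxE /= mevalXU mxvecE.
Qed.

Lemma mxeval_minors_mpoly_neq0 (R : idomainType) (A : 'M[R]_(N, M)) :
  reflect (forall f : 'I_N -> 'I_M, injective f -> \det (colsub f A) != 0)
          (mxeval (minors_mpoly R) A != 0).
Proof.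
rewrite mxeval_minors_mpoly; apply: (iffP idP) => [/prodf_neq0 minorsP f injf|minorsP].
  have := minorsP (finfun f); rewrite (eq_colsub f) => [|x]; last by rewrite ffunE.
  by apply; apply/injectiveP => x y; rewrite !ffunE; apply: injf.
by apply/prodf_neq0 => f /injectiveP; apply: minorsP.
Qed.

Lemma minors_mpoly_neq0 (R : numDomainType) : minors_mpoly R != 0.
Proof.
pose V : 'M[R]_(N, M) := Vandermonde N (\row_j (j.+1)%:R).
suff /mxeval_minors_mpoly_neq0 : forall f, injective f -> \det (colsub f V) != 0.
  by apply: contraNneq => ->; rewrite /mxeval meval0.
move=> f injf; have -> : colsub f V = Vandermonde N (\row_k ((f k).+1)%:R).
  by apply/matrixP => i j; rewrite !mxE.
rewrite det_Vandermonde; apply/prodf_neq0 => i _; apply/prodf_neq0 => j ij.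
rewrite !mxE subr_eq0 eqr_nat eqSS; apply: contraTneq ij => /val_inj/injf ->.
by rewrite ltnn.
Qed.

End MinorsPolynomial.

Theorem lemma2p3 (R : realType) (N M : nat) (hNM : (2 * N - 1 <= M)%N) :
  exists P : {mpoly R[N * M]}, P != 0 /\
    forall A : 'M[R]_(N, M), mxeval P A != 0 ->
      \rank A = N /\
      forall (S : {set 'I_M}) (u : 'rV[R]_M), (u <= A)%MS ->
        ((sigma S u <= A)%MS <-> (sigma S u = u \/ sigma S u = - u)).
Proof.
exists (minors_mpoly N M R); split=> [|A /mxeval_minors_mpoly_neq0 minorsP].
  exact: minors_mpoly_neq0.
split.
  have [|f [injf _]] := @exists_inj_into _ N [set: 'I_M].
    by rewrite cardsT card_ord; lia.
  exact: mxrank_minor_neq0 (minorsP f injf).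
move=> S u uA; split=> [sigmaA|]; last by case=> ->; rewrite ?eqmx_opp.
have [NS|NSC] := card_set_or_setC_ge S hNM.
- have [f [injf fS]] := exists_inj_into NS; right; apply/subr0_eq; rewrite opprK.
  apply: (submx_colsub_eq0 (minorsP f injf)); first exact: addmx_sub.
  exact: colsub_sigma_addr.
- have [f [injf fSC]] := exists_inj_into NSC; left; apply/subr0_eq.
  apply: (submx_colsub_eq0 (minorsP f injf)); first by rewrite addmx_sub ?eqmx_opp.
  by apply: colsub_sigma_subr => k; rewrite -in_setC.
Qed.
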